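(* Let $A$ be a configuration of at least $3$ pairwise distinct points in $\mathbb{R}^2$ and let $a\in A$. If the points of $A\setminus\{a\}$ are not all contained in a common line, then there is a line $L$ such that $|L\cap A|=2$ and $a\notin L$. *)

(* points of R^2 are pairs of reals; a finite configuration
   of pairwise distinct points is a duplicate-free list. *)
From Stdlib Require Import Reals List.
Open Scope R_scope.

Definition point := (R * R)%type.

Record line := mkLine { lu : R; lv : R; lw : R; lnz : lu <> 0 \/ lv <> 0 }.

Definition on_line (L : line) (p : point) : Prop :=
  lu L * fst p + lv L * snd p = lw L.

(* |L ∩ A| for a duplicate-free list A: the number of listed points on L. *)
Definition card_on_line (L : line) (A : list point) : nat :=
  length (filter (fun p => if Req_EM_T (lu L * fst p + lv L * snd p) (lw L)
                           then true else false) A).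

Definition collinear (B : list point) : Prop :=
  exists L : line, forall p, In p B -> on_line L p.

Definition remove_pt (a : point) (A : list point) : list point :=
  filter (fun p => if (Req_EM_T (fst p) (fst a)) then
                     if Req_EM_T (snd p) (snd a) then false else true
                   else true) A.

(* A projective map sends a to the point at infinity of the vertical lines, so that lines
   through a become vertical and the lines avoiding a are exactly the non-vertical ones.  It
   then suffices to find a non-vertical ordinary line for a non-collinear finite set, which
   Kelly's extremal argument provides when distance is measured vertically: take a point p
   and a non-vertical connecting line rr' with the smallest non-zero vertical gap, and among
   those the steepest line.  A third point on rr' would yield either a smaller gap or an
   equal gap on a steeper line. *)

From Stdlib Require Import Reals List Lra Psatz Classical.
Open Scope R_scope.

(** * Counting points on a line *)

Definition on_lineb (L : line) (p : point) : bool :=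
  if Req_EM_T (lu L * fst p + lv L * snd p) (lw L) then true else false.

Lemma on_lineb_spec (L : line) (p : point) : on_lineb L p = true <-> on_line L p.
Proof. unfold on_lineb, on_line. destruct Req_EM_T; split; congruence. Qed.

Lemma card_on_line_filter (L : line) (l : list point) :
  card_on_line L l = length (filter (on_lineb L) l).
Proof. reflexivity. Qed.

Lemma NoDup_length_pair {X : Type} (l : list X) (x y : X) :
  NoDup l -> In x l -> In y l -> x <> y ->
  (forall z, In z l -> z = x \/ z = y) -> length l = 2%nat.
Proof.
  intros Hl Hx Hy Hxy Hxy_only.
  assert (Hle : (length l <= length (x :: y :: nil))%nat).
  { apply NoDup_incl_length; [exact Hl|].
    intros z Hz. destruct (Hxy_only z Hz) as [->| ->]; simpl; tauto. }
  assert (Hge : (length (x :: y :: nil) <= length l)%nat).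
  { apply NoDup_incl_length.
    - constructor; [simpl; intuition|constructor; [simpl; tauto|constructor]].
    - intros z [<-|[<-|[]]]; assumption. }
  simpl in *. lia.
Qed.

Lemma card_on_line_pair (L : line) (l : list point) (r r' : point) :
  NoDup l -> In r l -> In r' l -> r <> r' -> on_line L r -> on_line L r' ->
  (forall z, In z l -> on_line L z -> z = r \/ z = r') -> card_on_line L l = 2%nat.
Proof.
  intros Hl Hr Hr' Hrr' Lr Lr' Honly. rewrite card_on_line_filter.
  apply (NoDup_length_pair _ r r'); try (apply filter_In; rewrite on_lineb_spec); auto.
  - apply NoDup_filter, Hl.
  - intros z Hz. apply filter_In in Hz as [Hz Lz]. apply on_lineb_spec in Lz. auto.
Qed.

Lemma card_on_line_pos (L : line) (l : list point) :
  card_on_line L l <> 0%nat -> exists p, In p l /\ on_line L p.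
Proof.
  rewrite card_on_line_filter. intro Hpos.
  destruct (filter (on_lineb L) l) as [|p l'] eqn:E; [contradiction|].
  assert (Hp : In p (filter (on_lineb L) l)) by (rewrite E; left; reflexivity).
  apply filter_In in Hp as [Hp Lp]. exists p. split; [exact Hp|apply on_lineb_spec, Lp].
Qed.

Lemma on_lineb_eq_iff (L L' : line) (p q : point) :
  (on_line L p <-> on_line L' q) -> on_lineb L p = on_lineb L' q.
Proof.
  intros H. destruct (on_lineb L p) eqn:E1, (on_lineb L' q) eqn:E2; try reflexivity.
  - rewrite on_lineb_spec, H, <- on_lineb_spec in E1. congruence.
  - rewrite on_lineb_spec, <- H, <- on_lineb_spec in E2. congruence.
Qed.

Lemma card_on_line_map (L L' : line) (f : point -> point) (l : list point) :
  (forall p, In p l -> (on_line L p <-> on_line L' (f p))) ->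
  card_on_line L l = card_on_line L' (map f l).
Proof.
  rewrite !card_on_line_filter.
  induction l as [|p l IH]; intros Hf; [reflexivity|]. simpl.
  rewrite (on_lineb_eq_iff L L' p (f p) (Hf p (or_introl eq_refl))).
  destruct (on_lineb L' (f p)); simpl; rewrite IH by (intros q Hq; apply Hf; right; exact Hq);
    reflexivity.
Qed.

Lemma In_remove_pt (a b : point) (A : list point) : In b (remove_pt a A) <-> In b A /\ b <> a.
Proof.
  unfold remove_pt. rewrite filter_In.
  split; intros [Hb H]; split; [exact Hb| |exact Hb|].
  - intros ->. destruct Req_EM_T; [|congruence]. destruct Req_EM_T; congruence.
  - destruct Req_EM_T; [|reflexivity]. destruct Req_EM_T; [|reflexivity].
    exfalso. apply H, injective_projections; assumption.
Qed.

Lemma card_on_line_remove_pt (L : line) (a : point) (A : list point) :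
  ~ on_line L a -> card_on_line L (remove_pt a A) = card_on_line L A.
Proof.
  intros Ha. rewrite !card_on_line_filter. unfold remove_pt.
  induction A as [|x A IH]; [reflexivity|]. simpl.
  destruct (Req_EM_T (fst x) (fst a)) as [E1|E1];
    [destruct (Req_EM_T (snd x) (snd a)) as [E2|E2]|]; simpl.
  - assert (Exa : x = a) by (apply injective_projections; assumption). subst x.
    destruct (on_lineb L a) eqn:E; [apply on_lineb_spec in E; contradiction|exact IH].
  - destruct (on_lineb L x); simpl; rewrite IH; reflexivity.
  - destruct (on_lineb L x); simpl; rewrite IH; reflexivity.
Qed.

(** * Vertical gaps *)

Definition slope (r r' : point) : R := (snd r' - snd r) / (fst r' - fst r).

Definition vgap (r r' p : point) : R := snd p - snd r - slope r r' * (fst p - fst r).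

Lemma vgap_left (r r' : point) : vgap r r' r = 0.
Proof. unfold vgap. ring. Qed.

Lemma vgap_right (r r' : point) : fst r <> fst r' -> vgap r r' r' = 0.
Proof. intros H. unfold vgap, slope. field. intro E. apply H. lra. Qed.

Lemma vgap_fst_inj (r r' x y : point) :
  vgap r r' x = 0 -> vgap r r' y = 0 -> fst x = fst y -> x = y.
Proof.
  unfold vgap. intros Hx Hy E. apply injective_projections; [exact E|].
  rewrite E in Hx. lra.
Qed.

Lemma vgap_chord (r r' p x y : point) :
  vgap r r' x = 0 -> vgap r r' y = 0 -> fst y <> fst p ->
  vgap p y x = - vgap r r' p * ((fst y - fst x) / (fst y - fst p)).
Proof.
  unfold vgap. set (m := slope r r'). intros Hx Hy Hyp. unfold slope.
  replace (snd x) with (snd r + m * (fst x - fst r)) by lra.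
  replace (snd y) with (snd r + m * (fst y - fst r)) by lra.
  field. intro E. apply Hyp. lra.
Qed.

Lemma slope_chord (r r' p y : point) :
  vgap r r' y = 0 -> fst y <> fst p ->
  slope p y = slope r r' - vgap r r' p / (fst y - fst p).
Proof.
  unfold vgap. set (m := slope r r'). intros Hy Hyp. unfold slope.
  replace (snd y) with (snd r + m * (fst y - fst r)) by lra.
  field. intro E. apply Hyp. lra.
Qed.

Lemma same_side_ratio (tx ty : R) :
  0 < tx * ty -> Rabs tx < Rabs ty -> 0 < (ty - tx) / ty < 1.
Proof.
  intros Hsame Hcloser.
  assert (Hty : ty <> 0) by (intro E; rewrite E, Rmult_0_r in Hsame; lra).
  assert (Eq : (ty - tx) / ty * ty = ty - tx) by (field; exact Hty).
  destruct (Rlt_or_le 0 ty) as [Hpos|Hneg].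
  - rewrite (Rabs_right ty), (Rabs_right tx) in Hcloser by nra. nra.
  - rewrite (Rabs_left ty), (Rabs_left tx) in Hcloser by nra. nra.
Qed.

Lemma abs_lt_sub_div_opposite (m d u w : R) :
  d <> 0 -> u < 0 < w -> Rabs m < Rabs (m - d / u) \/ Rabs m < Rabs (m - d / w).
Proof.
  intros Hd [Hu Hw].
  set (s := d / u). set (t := d / w).
  assert (Est : s * t * (u * w) = d * d).
  { unfold s, t. field. lra. }
  assert (Hdd : 0 < d * d) by (destruct (Rdichotomy _ _ Hd); nra).
  assert (Huw : u * w < 0) by nra.
  assert (Hopp : s * t < 0) by nra.
  clearbody s t.
  destruct (Rtotal_order s 0) as [Hs|[Hs|Hs]];
    [assert (0 < t) by nra | subst s; lra | assert (t < 0) by nra];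
    split_Rabs; lra.
Qed.

(** * Kelly's extremal argument *)

Definition admissible (p r r' : point) : Prop := fst r <> fst r' /\ vgap r r' p <> 0.

Section Extremal.

Variables (P : list point) (p r r' : point).
Hypotheses (Hp : In p P) (Hr : In r P) (Hr' : In r' P) (Hadm : admissible p r r').
Hypothesis Hmin : forall p1 r1 r1', In p1 P -> In r1 P -> In r1' P -> admissible p1 r1 r1' ->
  Rabs (vgap r r' p) <= Rabs (vgap r1 r1' p1).
Hypothesis Hsteep : forall p1 r1 r1', In p1 P -> In r1 P -> In r1' P -> admissible p1 r1 r1' ->
  Rabs (vgap r1 r1' p1) = Rabs (vgap r r' p) -> Rabs (slope r1 r1') <= Rabs (slope r r').

(* [x] lies strictly between the foot of [p] and [y]: the line [py] passes closer to [x]. *)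
Lemma extremal_no_same_side (x y : point) :
  In x P -> In y P -> vgap r r' x = 0 -> vgap r r' y = 0 ->
  0 < (fst x - fst p) * (fst y - fst p) -> Rabs (fst x - fst p) < Rabs (fst y - fst p) -> False.
Proof.
  intros Hx Hy Lx Ly Hsame Hcloser.
  assert (Hyp : fst y <> fst p) by (intro E; rewrite E, Rminus_diag, Rmult_0_r in Hsame; lra).
  pose proof (same_side_ratio _ _ Hsame Hcloser) as Hratio.
  replace (fst y - fst p - (fst x - fst p)) with (fst y - fst x) in Hratio by ring.
  assert (Hd : 0 < Rabs (vgap r r' p)) by (apply Rabs_pos_lt, Hadm).
  assert (Hgap : Rabs (vgap p y x)
                 = Rabs (vgap r r' p) * ((fst y - fst x) / (fst y - fst p))).
  { rewrite (vgap_chord r r' p x y Lx Ly Hyp), Rabs_mult, Rabs_Ropp, (Rabs_right (_ / _)) by lra.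
    reflexivity. }
  assert (Hadm' : admissible x p y).
  { split; [intro E; apply Hyp; symmetry; exact E|].
    intro E. rewrite E, Rabs_R0 in Hgap. nra. }
  pose proof (Hmin x p y Hx Hp Hy Hadm'). nra.
Qed.

(* [y] lies directly above or below [p] and [x], [z] are on both sides: one of [px], [pz] is steeper. *)
Lemma extremal_no_straddle (x y z : point) :
  In x P -> In y P -> In z P -> vgap r r' x = 0 -> vgap r r' y = 0 -> vgap r r' z = 0 ->
  fst y = fst p -> fst x < fst p < fst z -> False.
Proof.
  intros Hx Hy Hz Lx Ly Lz Hyp Hxz.
  assert (Hd := proj2 Hadm).
  assert (Hbound : forall w, In w P -> vgap r r' w = 0 -> fst w <> fst p ->
    Rabs (slope r r' - vgap r r' p / (fst w - fst p)) <= Rabs (slope r r')).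
  { intros w Hw Lw Hwp.
    assert (Hgap : vgap p w y = - vgap r r' p).
    { rewrite (vgap_chord r r' p y w Ly Lw Hwp), Hyp. field. intro E; apply Hwp; lra. }
    rewrite <- (slope_chord r r' p w Lw Hwp).
    apply (Hsteep y p w Hy Hp Hw).
    - split; [intro E; apply Hwp; symmetry; exact E|].
      rewrite Hgap. intro E; apply Hd; lra.
    - rewrite Hgap. apply Rabs_Ropp. }
  destruct (abs_lt_sub_div_opposite (slope r r') (vgap r r' p) (fst x - fst p) (fst z - fst p))
    as [Hlt|Hlt]; [exact Hd|lra| |].
  - pose proof (Hbound x Hx Lx ltac:(lra)). lra.
  - pose proof (Hbound z Hz Lz ltac:(lra)). lra.
Qed.

Lemma extremal_no_three (x y z : point) :
  In x P -> In y P -> In z P -> vgap r r' x = 0 -> vgap r r' y = 0 -> vgap r r' z = 0 ->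
  fst x < fst y < fst z -> False.
Proof.
  intros Hx Hy Hz Lx Ly Lz Hxyz.
  destruct (Rtotal_order (fst p) (fst y)) as [H|[H|H]].
  - apply (extremal_no_same_side y z); try assumption.
    + nra.
    + rewrite !Rabs_right by lra. lra.
  - apply (extremal_no_straddle x y z); try assumption; lra.
  - apply (extremal_no_same_side y x); try assumption.
    + nra.
    + rewrite !Rabs_left by lra. lra.
Qed.

Lemma extremal_line_ordinary (z : point) : In z P -> vgap r r' z = 0 -> z = r \/ z = r'.
Proof.
  intros Hz Lz.
  destruct (classic (z = r)) as [|Hzr]; [left; assumption|].
  destruct (classic (z = r')) as [|Hzr']; [right; assumption|].
  exfalso.
  destruct Hadm as [Hx _].
  pose proof (vgap_left r r') as Lr. pose proof (vgap_right r r' Hx) as Lr'.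
  assert (Hzx : fst z <> fst r) by (intro E; apply Hzr, (vgap_fst_inj r r'); assumption).
  assert (Hzx' : fst z <> fst r') by (intro E; apply Hzr', (vgap_fst_inj r r'); assumption).
  assert (Horder : fst r < fst r' < fst z \/ fst r < fst z < fst r' \/ fst r' < fst r < fst z \/
                   fst r' < fst z < fst r \/ fst z < fst r < fst r' \/ fst z < fst r' < fst r)
    by lra.
  destruct Horder as [H|[H|[H|[H|[H|H]]]]];
    [ apply (extremal_no_three r r' z) | apply (extremal_no_three r z r')
    | apply (extremal_no_three r' r z) | apply (extremal_no_three r' z r)
    | apply (extremal_no_three z r r') | apply (extremal_no_three z r' r) ]; assumption.
Qed.

End Extremal.

Lemma exists_argmin {X : Type} (l : list X) (g : X -> Prop) (f : X -> R) :
  (exists x, In x l /\ g x) -> exists x, In x l /\ g x /\ forall y, In y l -> g y -> f x <= f y.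
Proof.
  induction l as [|h t IH]; intros [x [Hx Hgx]]; [destruct Hx|].
  destruct (classic (exists y, In y t /\ g y)) as [Ht|Ht].
  - destruct (IH Ht) as [y [Hy [Hgy Hmin]]].
    destruct (classic (g h /\ f h <= f y)) as [[Hgh Hle]|Hnot].
    + exists h. split; [left; reflexivity|split; [exact Hgh|]].
      intros z [<-|Hz] Hgz; [lra|]. specialize (Hmin z Hz Hgz). lra.
    + exists y. split; [right; exact Hy|split; [exact Hgy|]].
      intros z [<-|Hz] Hgz; [|exact (Hmin z Hz Hgz)].
      destruct (Rle_dec (f h) (f y)); [exfalso; tauto|lra].
  - assert (Hxt : x = h) by (destruct Hx as [|Hx]; [congruence|exfalso; eauto]). subst x.
    exists h. split; [left; reflexivity|split; [exact Hgx|]].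
    intros z [<-|Hz] Hgz; [lra|exfalso; eauto].
Qed.

Lemma exists_extremal_triple (P : list point) :
  (exists p r r', In p P /\ In r P /\ In r' P /\ admissible p r r') ->
  exists p r r', In p P /\ In r P /\ In r' P /\ admissible p r r' /\
    (forall p1 r1 r1', In p1 P -> In r1 P -> In r1' P -> admissible p1 r1 r1' ->
       Rabs (vgap r r' p) <= Rabs (vgap r1 r1' p1)) /\
    (forall p1 r1 r1', In p1 P -> In r1 P -> In r1' P -> admissible p1 r1 r1' ->
       Rabs (vgap r1 r1' p1) = Rabs (vgap r r' p) -> Rabs (slope r1 r1') <= Rabs (slope r r')).
Proof.
  intros (p & r & r' & Hp & Hr & Hr' & Hadm).
  set (l := list_prod P (list_prod P P)).
  assert (Hl : forall p r r', In (p, (r, r')) l <-> In p P /\ In r P /\ In r' P)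
    by (intros; unfold l; rewrite !in_prod_iff; tauto).
  set (adm := fun t : point * (point * point) => admissible (fst t) (fst (snd t)) (snd (snd t))).
  set (gap := fun t : point * (point * point) => Rabs (vgap (fst (snd t)) (snd (snd t)) (fst t))).
  destruct (exists_argmin l adm gap) as [t0 [Ht0 [Hadm0 Hmin0]]].
  { exists (p, (r, r')). split; [apply Hl; auto|exact Hadm]. }
  destruct (exists_argmin l (fun t => adm t /\ gap t = gap t0)
              (fun t => - Rabs (slope (fst (snd t)) (snd (snd t)))))
    as [[p1 [r1 r1']] [Hin [[Hadm1 Hgap1] Hsteep1]]].
  { exists t0. auto. }
  apply Hl in Hin as (Hp1 & Hr1 & Hr1').
  exists p1, r1, r1'. unfold adm, gap in *; simpl in *.
  refine (conj Hp1 (conj Hr1 (conj Hr1' (conj Hadm1 (conj _ _))))).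
  - intros p2 r2 r2' Hp2 Hr2 Hr2' Hadm2.
    rewrite Hgap1. apply (Hmin0 (p2, (r2, r2'))); [apply Hl; auto|exact Hadm2].
  - intros p2 r2 r2' Hp2 Hr2 Hr2' Hadm2 Hgap2.
    enough (- Rabs (slope r1 r1') <= - Rabs (slope r2 r2')) by lra.
    apply (Hsteep1 (p2, (r2, r2'))); [apply Hl; auto|]. simpl. split; [exact Hadm2|congruence].
Qed.

Definition some_line : line := mkLine 1 0 0 (or_introl R1_neq_R0).

Lemma noncollinear_admissible (P : list point) :
  ~ collinear P -> exists p r r', In p P /\ In r P /\ In r' P /\ admissible p r r'.
Proof.
  intros Hnc. apply NNPP. intros Hnone. apply Hnc.
  destruct (classic (exists r r', In r P /\ In r' P /\ fst r <> fst r'))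
    as [(r & r' & Hr & Hr' & Hx)|Hvert].
  - exists (mkLine (- slope r r') 1 (snd r - slope r r' * fst r) (or_intror R1_neq_R0)).
    intros q Hq. unfold on_line; simpl.
    destruct (Req_dec (vgap r r' q) 0) as [E|E]; [unfold vgap in E; lra|].
    exfalso. apply Hnone. exists q, r, r'. repeat split; assumption.
  - destruct P as [|r0 P0]; [exists some_line; intros q []|].
    exists (mkLine 1 0 (fst r0) (or_introl R1_neq_R0)).
    intros q Hq. unfold on_line; simpl.
    destruct (Req_dec (fst q) (fst r0)) as [E|E]; [lra|].
    exfalso. apply Hvert. exists q, r0. repeat split; [exact Hq|left; reflexivity|exact E].
Qed.

Lemma exists_ordinary_nonvertical_line (P : list point) :
  NoDup P -> ~ collinear P -> exists L : line, lv L <> 0 /\ card_on_line L P = 2%nat.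
Proof.
  intros HP Hnc.
  destruct (exists_extremal_triple P (noncollinear_admissible P Hnc))
    as (p & r & r' & Hp & Hr & Hr' & Hadm & Hmin & Hsteep).
  set (L := mkLine (- slope r r') 1 (snd r - slope r r' * fst r) (or_intror R1_neq_R0)).
  assert (HL : forall q, on_line L q <-> vgap r r' q = 0)
    by (intros q; unfold on_line, vgap; simpl; split; intro; lra).
  exists L. split; [exact R1_neq_R0|].
  pose proof Hadm as [Hx _].
  apply (card_on_line_pair L P r r'); try assumption.
  - intros E. apply Hx. rewrite E. reflexivity.
  - apply HL, vgap_left.
  - apply HL, vgap_right, Hx.
  - intros z Hz Lz. apply HL in Lz.
    exact (extremal_line_ordinary P p r r' Hp Hr Hr' Hadm Hmin Hsteep z Hz Lz).
Qed.

(** * Sending a point to infinity *)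

Definition shear (a : point) (c : R) (b : point) : R := snd b - snd a + c * (fst b - fst a).

(* In homogeneous coordinates relative to [a], [(u : v : 1) |-> (u : 1 : v + c u)]: [a] goes to
   the vertical point at infinity and the line through [a] of slope [-c] to the line at
   infinity. *)
Definition persp (a : point) (c : R) (b : point) : point :=
  ((fst b - fst a) / shear a c b, 1 / shear a c b).

Lemma on_line_persp (a : point) (c : R) (L : line) (b : point) :
  shear a c b <> 0 ->
  (on_line L (persp a c b) <->
   (lu L - lw L * c) * (fst b - fst a) - lw L * (snd b - snd a) = - lv L).
Proof.
  intros Hs. unfold on_line, persp; simpl.
  assert (Es : shear a c b = snd b - snd a + c * (fst b - fst a)) by reflexivity.
  assert (E : (lu L * ((fst b - fst a) / shear a c b) + lv L * (1 / shear a c b)) * shear a c b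
              = lu L * (fst b - fst a) + lv L) by (field; exact Hs).
  split; intro H.
  - rewrite H, Es in E. lra.
  - apply (Rmult_eq_reg_r (shear a c b)); [|exact Hs]. rewrite E, Es. lra.
Qed.

Lemma persp_preimage_line (a : point) (c : R) (L : line) (b0 : point) :
  shear a c b0 <> 0 -> on_line L (persp a c b0) ->
  exists L' : line,
    (forall b, shear a c b <> 0 -> (on_line L' b <-> on_line L (persp a c b))) /\
    (on_line L' a -> lv L = 0).
Proof.
  intros Hs0 H0.
  assert (Hnz : lu L - lw L * c <> 0 \/ - lw L <> 0).
  { destruct (Req_dec (lw L) 0) as [Ew|Ew]; [left|right; lra].
    intros Eu. apply on_line_persp in H0; [|exact Hs0]. rewrite Eu, Ew in H0.
    rewrite Ew, Rmult_0_l, Rminus_0_r in Eu.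
    destruct (lnz L) as [Hu|Hv]; [contradiction|lra]. }
  exists (mkLine _ _ (- lv L + (lu L - lw L * c) * fst a - lw L * snd a) Hnz).
  split.
  - intros b Hs. rewrite (on_line_persp a c L b Hs). unfold on_line; simpl. split; intro; lra.
  - unfold on_line; simpl. intro. lra.
Qed.

Lemma persp_injective (a : point) (c : R) (b b' : point) :
  shear a c b <> 0 -> shear a c b' <> 0 -> persp a c b = persp a c b' -> b = b'.
Proof.
  unfold persp. intros Hs Hs' E. injection E as Ex Ey.
  assert (Es : shear a c b = shear a c b').
  { apply Rinv_eq_reg. unfold Rdiv in Ey. rewrite !Rmult_1_l in Ey. exact Ey. }
  rewrite Es in Ex.
  assert (Eu : fst b = fst b').
  { apply (Rmult_eq_reg_r (/ shear a c b')) in Ex; [lra|apply Rinv_neq_0_compat, Hs']. }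
  unfold shear in Es. rewrite Eu in Es.
  apply injective_projections; [exact Eu|lra].
Qed.

Lemma exists_real_not_In (l : list R) : exists c, ~ In c l.
Proof.
  assert (Hub : forall z, In z l -> z <= fold_right Rmax 0 l).
  { induction l as [|h t IH]; intros z Hz; [destruct Hz|]. simpl.
    destruct Hz as [<-|Hz]; [apply Rmax_l|].
    eapply Rle_trans; [apply IH, Hz|apply Rmax_r]. }
  exists (fold_right Rmax 0 l + 1). intros Hin. specialize (Hub _ Hin). lra.
Qed.

Lemma exists_shear_nonzero (a : point) (B : list point) :
  (forall b, In b B -> b <> a) -> exists c, forall b, In b B -> shear a c b <> 0.
Proof.
  intros Hne.
  destruct (exists_real_not_In (map (fun b => - (snd b - snd a) / (fst b - fst a)) B))
    as [c Hc].
  exists c. intros b Hb Hs. unfold shear in Hs.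
  destruct (Req_dec (fst b - fst a) 0) as [E|E].
  - rewrite E, Rmult_0_r in Hs. apply (Hne b Hb), injective_projections; lra.
  - apply Hc, in_map_iff. exists b. split; [|exact Hb].
    replace (- (snd b - snd a)) with (c * (fst b - fst a)) by lra. field. exact E.
Qed.

Lemma collinear_persp_inv (a : point) (c : R) (B : list point) :
  (forall b, In b B -> shear a c b <> 0) -> collinear (map (persp a c) B) -> collinear B.
Proof.
  intros Hs [L HL].
  destruct B as [|b0 B0]; [exists some_line; intros q []|].
  destruct (persp_preimage_line a c L b0) as [L' [HL' _]].
  - apply Hs. left. reflexivity.
  - apply HL. left. reflexivity.
  - exists L'. intros q Hq. apply HL'; [apply Hs, Hq|]. apply HL, in_map, Hq.
Qed.

Theorem mainTheorem20 (A : list point) (a : point) :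
  NoDup A -> (3 <= length A)%nat -> In a A ->
  ~ collinear (remove_pt a A) ->
  exists L : line, card_on_line L A = 2%nat /\ ~ on_line L a.
Proof.
  intros HA _ _ Hnc.
  set (B := remove_pt a A) in *.
  assert (HBa : forall b, In b B -> b <> a) by (intros b Hb; apply In_remove_pt in Hb; tauto).
  destruct (exists_shear_nonzero a B HBa) as [c Hc].
  set (P := map (persp a c) B).
  assert (HP : NoDup P).
  { apply NoDup_map_NoDup_ForallPairs; [|apply NoDup_filter, HA].
    intros b b' Hb Hb'. apply persp_injective; auto. }
  assert (HPnc : ~ collinear P) by (intros H; apply Hnc, (collinear_persp_inv a c B Hc H)).
  destruct (exists_ordinary_nonvertical_line P HP HPnc) as [L [HvL HL]].
  destruct (card_on_line_pos L P) as [q [Hq Lq]]; [rewrite HL; discriminate|].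
  apply in_map_iff in Hq as [b0 [<- Hb0]].
  destruct (persp_preimage_line a c L b0 (Hc b0 Hb0) Lq) as [L' [HL' HaL']].
  assert (Ha' : ~ on_line L' a) by (intros H; apply HvL, HaL', H).
  exists L'. split; [|exact Ha'].
  rewrite <- (card_on_line_remove_pt L' a A Ha'). fold B.
  rewrite (card_on_line_map L' L (persp a c) B); [exact HL|].
  intros b Hb. apply HL', Hc, Hb.
Qed.
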